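(* For any pointed irregular type $Q$ with $K=\max_i\mathrm{slope}(q_i)$, the spaces $\mathbf{SB}(Q)$ and $\mathbf B(Q)$ (which are complex manifolds, Zariski open in complex vector spaces) are homotopy equivalent, and $\dim_{\mathbb C}\mathbf{SB}(Q)=\dim_{\mathbb C}\mathbf B(Q)-\lfloor K\rfloor$.
   Context: Exponential factors: finite sums $q=\sum_ka_kx^k$, $a_k\in\mathbb C$, $k\in\mathbb Q_{>0}$; $\mathrm{slope}(q)$ = largest exponent with nonzero coefficient ($0$ if $q=0$); $\mathrm{ram}(q)$ = least $r\ge1$ with $q\in x^{1/r}\mathbb C[x^{1/r}]$. Galois operator $\sigma(\sum a_kx^k)=\sum a_ke^{-2\pi\sqrt{-1}k}x^k$. Pointed irregular type: $Q=[(n_1,q_1),\dots,(n_m,q_m)]$ with $n_i\in\mathbb N_{>0}$, $q_i$ in pairwise distinct Galois orbits; $Q'\sim Q$ means same length and multiplicities and $\mathrm{slope}(\sigma^k(q'_i)-\sigma^l(q'_j))=\mathrm{slope}(\sigma^k(q_i)-\sigma^l(q_j))$ for all $i,j$, $0\le k\le\mathrm{ram}(q_i)$, $0\le l\le\mathrm{ram}(q_j)$. Configuration spaces: $r=\mathrm{lcm}_i\mathrm{ram}(q_i)$, $K=\max_i\mathrm{slope}(q_i)$, $s=rK$; for $\mathbf a\in\mathbb C^{ms}$, $Q_{\mathbf a}=[(n_i,\sum_{j=1}^sa_{i,j}x^{j/r})]_{i=1}^m$. $\mathbf B(Q)=\{\mathbf a:Q_{\mathbf a}\sim Q\}$ with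 subspace topology; $\mathbf{SB}(Q)=\{\mathbf a\in\mathbf B(Q):\mathrm{Tr}(Q_{\mathbf a})=0\}$ where $\mathrm{Tr}([(n_i,p_i)])=\sum_in_i\sum_{t=0}^{\mathrm{ram}(p_i)-1}\sigma^t(p_i)$. *)

From HB Require Import structures.
From mathcomp Require Import all_boot all_order all_algebra.
From mathcomp Require Import reals trigo.
From mathcomp Require Import complex.
Set Implicit Arguments. Unset Strict Implicit. Unset Printing Implicit Defensive.
Import Order.TTheory GRing.Theory Num.Theory.
Local Open Scope ring_scope.

Section Defs.
Variable R : realType.
Local Notation C := R[i].

(** exp(-2 pi sqrt(-1) k) for rational k *)
Definition emk (k : rat) : C :=
  Complex (cos (2 * pi * ratr k)) (- sin (2 * pi * ratr k)).

(** Exponential factor: a finite formal sum  sum_p p.2 x^(p.1), represented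
    as a list of (exponent, coefficient) pairs (repetitions are summed). *)
Definition expfac := seq (rat * C).

Definition coef (q : expfac) (e : rat) : C := \sum_(p <- q | p.1 == e) p.2.

Definition is_expfac (q : expfac) : bool := all (fun p => 0 < p.1) q.

Definition slope (q : expfac) : rat :=
  \big[Num.max/0]_(p <- q | coef q p.1 != 0) p.1.

Definition ram_pred (q : expfac) (r : nat) : bool :=
  (0 < r)%N && all (fun p => (coef q p.1 != 0) ==> (r%:Q * p.1 \is a Num.int)) q.

Lemma ram_exists q : exists r, ram_pred q r.
Proof.
exists (\prod_(p <- q) `|denq p.1|)%N; apply/andP; split.
  by rewrite prodn_gt0 // => p; rewrite absz_gt0 denq_neq0.
apply/allP => p pq; apply/implyP => _.
rewrite (big_rem p pq) /= PoszM intrM mulrC mulrA absz_denq -numqE mulrC.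
by rewrite -intrM intr_int.
Qed.

(** ram(q) = least r >= 1 with q in x^(1/r) C[x^(1/r)] *)
Definition ram (q : expfac) : nat := ex_minn (ram_exists q).

Definition sigma (q : expfac) : expfac := [seq (p.1, emk p.1 * p.2) | p <- q].
Definition sigman (k : nat) (q : expfac) : expfac := iter k sigma q.
Definition esub (q q' : expfac) : expfac := q ++ [seq (p.1, - p.2) | p <- q'].

Definition eqexp (q q' : expfac) : Prop := forall e, coef q e = coef q' e.

Definition pit := seq (nat * expfac).

Definition is_pit (Q : pit) : Prop :=
  [/\ forall i, (i < size Q)%N -> (0 < (nth (0%N, [::]) Q i).1)%N,
      forall i, (i < size Q)%N -> is_expfac (nth (0%N, [::]) Q i).2 &
      forall i j, (i < size Q)%N -> (j < size Q)%N -> i <> j ->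
        forall k, ~ eqexp (sigman k (nth (0%N, [::]) Q i).2)
                          (nth (0%N, [::]) Q j).2 ].

Definition mult (Q : pit) (i : nat) : nat := (nth (0%N, [::]) Q i).1.
Definition fac (Q : pit) (i : nat) : expfac := (nth (0%N, [::]) Q i).2.

Definition sim (Q' Q : pit) : Prop :=
  [/\ is_pit Q', is_pit Q, size Q' = size Q,
      forall i, (i < size Q)%N -> mult Q' i = mult Q i &
      forall i j k l, (i < size Q)%N -> (j < size Q)%N ->
        (k <= ram (fac Q i))%N -> (l <= ram (fac Q j))%N ->
        slope (esub (sigman k (fac Q' i)) (sigman l (fac Q' j))) =
        slope (esub (sigman k (fac Q i)) (sigman l (fac Q j))) ].

Definition rQ (Q : pit) : nat := \big[lcmn/1%N]_(p <- Q) ram p.2.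
Definition KQ (Q : pit) : rat := \big[Num.max/0]_(p <- Q) slope p.2.
Definition sQ (Q : pit) : nat := `|Num.floor ((rQ Q)%:Q * KQ Q)|%N.

(** Q_a for a = (a_{i,j}) in C^{m s}, m = size Q, j = 1..s (index j : 'I_s stands for j+1) *)
Definition Qa (Q : pit) (a : 'M[C]_(size Q, sQ Q)) : pit :=
  [seq (mult Q i, [seq (((j.+1)%:Q / (rQ Q)%:Q), a i j) | j : 'I_(sQ Q) <- enum 'I_(sQ Q)])
  | i : 'I_(size Q) <- enum 'I_(size Q)].

Definition etrace (Q : pit) : expfac :=
  flatten [seq [seq (e.1, (np.1)%:R * e.2)
               | e <- flatten [seq sigman t np.2 | t <- iota 0 (ram np.2)]]
          | np <- Q].

Definition Bsp (Q : pit) : 'M[C]_(size Q, sQ Q) -> Prop := fun a => sim (@Qa Q a) Q.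
Definition SBsp (Q : pit) : 'M[C]_(size Q, sQ Q) -> Prop :=
  fun a => @Bsp Q a /\ eqexp (etrace (@Qa Q a)) [::].

Definition cabs (z : C) : R := Num.sqrt (complex.Re z ^+ 2 + complex.Im z ^+ 2).
Definition mdist m n (a b : 'M[C]_(m, n)) : R :=
  \sum_(i < m) \sum_(j < n) cabs (a i j - b i j).

Definition cont_on m n m' n' (S : 'M[C]_(m, n) -> Prop)
    (f : 'M[C]_(m, n) -> 'M[C]_(m', n')) : Prop :=
  forall x, S x -> forall e : R, 0 < e -> exists2 d : R, 0 < d &
    forall y, S y -> mdist x y < d -> mdist (f x) (f y) < e.

Definition maps_into m n m' n' (S : 'M[C]_(m, n) -> Prop)
    (T : 'M[C]_(m', n') -> Prop) (f : 'M[C]_(m, n) -> 'M[C]_(m', n')) : Prop :=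
  forall x, S x -> T (f x).

Definition homotopic m n m' n' (S : 'M[C]_(m, n) -> Prop)
    (T : 'M[C]_(m', n') -> Prop) (f g : 'M[C]_(m, n) -> 'M[C]_(m', n')) : Prop :=
  exists H : 'M[C]_(m, n) -> R -> 'M[C]_(m', n'),
    [/\ forall x t, S x -> 0 <= t <= 1 -> T (H x t),
        forall x, S x -> H x 0 = f x,
        forall x, S x -> H x 1 = g x &
        (forall x t, S x -> 0 <= t <= 1 -> forall e : R, 0 < e ->
          exists2 d : R, 0 < d & forall y u, S y -> 0 <= u <= 1 ->
            mdist x y < d -> `|t - u| < d -> mdist (H x t) (H y u) < e) ].

Definition homotopy_equiv m n m' n' (S : 'M[C]_(m, n) -> Prop)
    (T : 'M[C]_(m', n') -> Prop) : Prop :=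
  exists (f : 'M[C]_(m, n) -> 'M[C]_(m', n')) (g : 'M[C]_(m', n') -> 'M[C]_(m, n)),
    [/\ cont_on S f /\ maps_into S T f, cont_on T g /\ maps_into T S g,
        homotopic S S (g \o f) id & homotopic T T (f \o g) id ].

(** S is a (nonempty) open subset of a complex linear subspace of dimension d
    of C^(m x n); this d is then the complex dimension of the manifold S. *)
Definition open_in_subspace_dim m n (S : 'M[C]_(m, n) -> Prop) (d : nat) : Prop :=
  (exists x, S x) /\
  exists k (A : 'M[C]_(k, m * n)),
    [/\ \rank A = d,
        forall x, S x -> (mxvec x <= A)%MS &
        (forall x, S x -> exists2 e : R, 0 < e &
          forall y, (mxvec y <= A)%MS -> mdist x y < e -> S y) ].

End Defs.

From HB Require Import structures.
From mathcomp Require Import all_boot all_order all_algebra.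
From mathcomp Require Import reals trigo.
From mathcomp Require Import complex.
From mathcomp Require Import ring lra zify.
Set Implicit Arguments. Unset Strict Implicit. Unset Printing Implicit Defensive.
Import Order.TTheory GRing.Theory Num.Theory.
Local Open Scope ring_scope.

(** Exponential factors matter only through their coefficients [coef q]; sigma
    scales the coefficient of x^e by [emk e], which is 1 iff e is integral.
    Every exponent of Q lies on the grid (j+1)/r, j < s, so a matrix a is the
    coefficient list of Q_a.  General facts come first (the character [emk],
    slopes and ramification, a kernel-rank lemma, l^1 estimates for row
    shifts); then, for a fixed Q:
    1. a is in B(Q) iff the slopes of sigma^k q_i - sigma^l q_j agree with
       those of Q ([Bsp_iff]);
    2. these slopes ignore the sigma-invariant integral columns, so removing
       their weighted mean retracts B(Q) onto SB(Q), where the weighted sums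
       vanish, and the straight-line homotopy stays in B(Q) ([homotopy_SB_B]);
    3. the slope conditions are linear equations plus an open condition, and
       the floor K trace equations are independent on their solution space
       ([Bsp_open], [SBsp_open], [rank_ker_all_eqs]). *)

Section UnitCircle.
Variable R : realType.
Local Notation C := R[i].
Implicit Types (e : rat).

Lemma emkD x y : emk R (x + y) = emk R x * emk R y.
Proof.
rewrite /emk; set a := 2 * pi * ratr x; set b := 2 * pi * ratr y.
have -> : 2 * pi * ratr (x + y) = a + b :> R by rewrite /a /b rmorphD mulrDr.
rewrite cosD sinD; apply/eqP; rewrite eq_complex /=; apply/andP; split; apply/eqP.
  by rewrite mulrNN.
by rewrite mulrN mulNr -opprD addrC.
Qed.

Lemma emk0 : emk R 0 = 1.
Proof. by rewrite /emk rmorph0 mulr0 cos0 sin0 oppr0. Qed.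

Lemma emk1 : emk R 1 = 1.
Proof.
rewrite /emk rmorph1 mulr1 (_ : 2 * pi = pi *+ 2) ?mulr_natl //.
by rewrite cos2pi sin2pi oppr0.
Qed.

Lemma emkN e : emk R (- e) * emk R e = 1.
Proof. by rewrite -emkD addNr emk0. Qed.

Lemma emk_int (z : int) : emk R z%:~R = 1.
Proof.
have emk_nat (n : nat) : emk R n%:R = 1.
  by elim: n => [|n IH]; rewrite ?emk0 // -addn1 natrD emkD IH emk1 mulr1.
case: z => n; first exact: emk_nat.
by rewrite NegzE mulrNz -(emkN (n.+1)%:R) emk_nat mulr1.
Qed.

Lemma emkX e (k : nat) : emk R e ^+ k = emk R (k%:R * e).
Proof.
elim: k => [|k IH]; first by rewrite expr0 mul0r emk0.
by rewrite exprS IH -emkD -{1}[e]mul1r -mulrDl -natr1 addrC.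
Qed.

(** On [0, 1/2] the cosine part of [emk] is injective, so only 0 maps to 1. *)
Lemma emk_eq1_small e : 0 <= e <= 1/2 -> emk R e = 1 -> e = 0.
Proof.
move=> /andP[e0 e1] /eqP; rewrite eq_complex /= => /andP[/eqP cos1 _].
have re0 : 0 <= ratr e :> R by rewrite -(rmorph0 (ratr : {rmorphism rat -> R})) ler_rat.
have re1 : ratr e <= 1/2 :> R.
  by rewrite (_ : 1/2 = ratr (1/2)) ?ler_rat // rmorphM rmorph1 fmorphV rmorph_nat.
have pi0 := pi_gt0 R.
have angle0 : 2 * pi * ratr e = 0 :> R.
  apply: cos_inj; rewrite ?cos0 // in_itv /= ?lexx ?(ltW pi0) //.
  apply/andP; split; first by rewrite mulr_ge0 // mulr_ge0 // ltW.
  nra.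
apply: (@fmorph_inj _ _ (ratr : {rmorphism rat -> R})); rewrite rmorph0.
apply: (mulfI (_ : 2 * pi != 0)); first by rewrite mulf_neq0 ?pnatr_eq0 ?lt0r_neq0.
by rewrite angle0 mulr0.
Qed.

Lemma emk_eq1 e : emk R e = 1 -> e \is a Num.int.
Proof.
move=> he; set n := Num.floor e; set f := e - n%:~R.
have f0 : 0 <= f by rewrite subr_ge0 floor_le.
have f1 : f < 1 by have := floorD1_gt e; rewrite intrD /f -/n => ?; lra.
have hf : emk R f = 1 by rewrite /f emkD he -mulrNz emk_int mulr1.
have [fs|fl] := leP f (1/2).
  have /eqP := emk_eq1_small (introT andP (conj f0 fs)) hf.
  by rewrite subr_eq0 => /eqP ->; rewrite intr_int.
have hg : emk R (1 - f) = 1 by rewrite emkD emk1 mul1r -(emkN f) hf mulr1.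
have g0 : 0 <= 1 - f <= 1/2 by apply/andP; split; lra.
by have /eqP := emk_eq1_small g0 hg; rewrite subr_eq0 => /eqP f1'; rewrite -f1' ltxx in f1.
Qed.

Lemma emkX_eq1 e (k : nat) : (emk R e ^+ k == 1) = (k%:Q * e \is a Num.int).
Proof.
rewrite emkX; apply/eqP/idP => [/emk_eq1 //|hi].
by rewrite -(floorK hi) emk_int.
Qed.

Lemma cabsE (z : C) : cabs z = Normc.normc z.
Proof. by case: z. Qed.

Lemma cabs_ge0 (z : C) : 0 <= cabs z.
Proof. exact: sqrtr_ge0. Qed.

Lemma cabsD (x y : C) : cabs (x + y) <= cabs x + cabs y.
Proof. rewrite !cabsE; exact: le_normcD. Qed.

Lemma cabsM (x y : C) : cabs (x * y) = cabs x * cabs y.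
Proof. rewrite !cabsE; exact: Normc.normcM. Qed.

Lemma cabsN (x : C) : cabs (- x) = cabs x.
Proof. rewrite !cabsE; exact: normcN. Qed.

Lemma cabsB (x y : C) : cabs (x - y) = cabs (y - x).
Proof. by rewrite -cabsN opprB. Qed.

Lemma cabs0 : cabs (0 : C) = 0.
Proof. by rewrite cabsE Normc.normc0. Qed.

Lemma cabs_eq0 (z : C) : cabs z = 0 -> z = 0.
Proof. rewrite cabsE; exact: Normc.eq0_normc. Qed.

Lemma cabs_real (t : R) : cabs (t%:C)%C = `|t|.
Proof. by rewrite /cabs /= expr0n /= addr0 sqrtr_sqr. Qed.

Lemma cabs_nat (n : nat) : cabs (n%:R : C) = n%:R.
Proof.
have -> : (n%:R : C) = (n%:R : R)%:C%C by rewrite rmorph_nat.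
by rewrite cabs_real normr_nat.
Qed.

Lemma cabs_emk e : cabs (emk R e) = 1.
Proof. by rewrite /cabs /= sqrrN cos2Dsin2 sqrtr1. Qed.

Lemma cabs_sum (I : Type) (rs : seq I) (P : pred I) (F : I -> C) :
  cabs (\sum_(i <- rs | P i) F i) <= \sum_(i <- rs | P i) cabs (F i).
Proof.
elim/big_rec2: _ => [|i y1 y2 _ h]; first by rewrite cabs0.
by apply: le_trans (cabsD _ _) _; rewrite lerD2l.
Qed.

Lemma cabs_interp (t u : R) (x y : C) : 0 <= u <= 1 ->
  cabs ((1 - t)%:C%C * x - (1 - u)%:C%C * y) <= `|t - u| * cabs x + cabs (x - y).
Proof.
move=> /andP[u0 u1].
have -> : (1 - t)%:C%C * x - (1 - u)%:C%C * y = (u - t)%:C%C * x + (1 - u)%:C%C * (x - y).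
  by rewrite !rmorphB rmorph1; ring.
apply: le_trans (cabsD _ _) _; rewrite !cabsM !cabs_real distrC lerD2l.
by rewrite ger0_norm ?subr_ge0 // -[X in _ <= X]mul1r ler_wpM2r ?cabs_ge0 //; lra.
Qed.

Lemma sum_root_unity (F : idomainType) (z : F) n : z ^+ n = 1 -> z != 1 -> \sum_(t < n) z ^+ t = 0.
Proof.
move=> zn z1; have /eqP : (z - 1) * \sum_(t < n) z ^+ t = 0 by rewrite -subrX1 zn subrr.
by rewrite mulf_eq0 subr_eq0 (negbTE z1) => /eqP.
Qed.

End UnitCircle.

Section ExponentialFactors.
Variable R : realType.
Local Notation C := R[i].
Implicit Types (q : expfac R) (e : rat).

Lemma coef_nil e : coef ([::] : expfac R) e = 0.
Proof. by rewrite /coef big_nil. Qed.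

Lemma coef_cat q1 q2 e : coef (q1 ++ q2) e = coef q1 e + coef q2 e.
Proof. by rewrite /coef big_cat. Qed.

Lemma coef_map_scale (f : rat -> C) q e :
  coef [seq (p.1, f p.1 * p.2) | p <- q] e = f e * coef q e.
Proof. by rewrite /coef big_map /= mulr_sumr; apply: eq_bigr => p /eqP ->. Qed.

Lemma coef_sigman k q e : coef (sigman k q) e = emk R e ^+ k * coef q e.
Proof.
elim: k => [|k IH]; first by rewrite expr0 mul1r.
by rewrite /sigman iterS -/(sigman k q) coef_map_scale IH exprS mulrA.
Qed.

Lemma coef_esub q q' e : coef (esub q q') e = coef q e - coef q' e.
Proof.
rewrite /esub coef_cat /coef big_map /= -sumrN.
by congr (_ + _); apply: eq_bigr.
Qed.

Lemma coef_flatten (ss : seq (expfac R)) e :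
  coef (flatten ss) e = \sum_(s <- ss) coef s e.
Proof.
elim: ss => [|s ss IH]; first by rewrite big_nil coef_nil.
by rewrite /= coef_cat IH big_cons.
Qed.

Lemma coef_nz_in q e : coef q e != 0 -> exists2 p, p \in q & p.1 = e.
Proof.
have [/hasP[p pq /eqP pe]|/hasPn hn] := boolP (has (fun p : rat * C => p.1 == e) q).
  by move=> _; exists p.
rewrite /coef big_seq_cond big1 ?eqxx // => p /andP[pq pe].
by rewrite (negbTE (hn p pq)) in pe.
Qed.

Lemma bigmax_attained (r : seq (rat * C)) (P : pred (rat * C)) :
  let M := \big[Num.max/0]_(p <- r | P p) p.1 in
  M = 0 \/ exists2 p, p \in r & P p /\ p.1 = M.
Proof.
rewrite /= big_seq_cond; elim/big_ind: _ => [|x y hx hy|p /andP[pr Pp]].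
- by left.
- by rewrite /Num.max; case: ifP.
- by right; exists p.
Qed.

Lemma slope_ge0 q : 0 <= slope q.
Proof. exact: bigmax_ge_id. Qed.

Lemma slope_ub q e : coef q e != 0 -> e <= slope q.
Proof.
move=> /[dup] nz /coef_nz_in [p pq pe]; rewrite -pe.
by apply: (le_bigmax_seq 0 p _ (fun p : rat * C => p.1) pq); rewrite /= pe.
Qed.

Lemma slope_att q : slope q = 0 \/ coef q (slope q) != 0.
Proof.
case: (bigmax_attained q (fun p => coef q p.1 != 0)) => /= h; first by left.
by right; case: h => p _ [Pp pe]; rewrite /slope -pe.
Qed.

Lemma slope_char q c : 0 <= c -> (forall e, coef q e != 0 -> e <= c) ->
  (c = 0 \/ coef q c != 0) -> slope q = c.
Proof.
move=> c0 h hc; apply: le_anti; apply/andP; split.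
  by apply: bigmax_le => // p; apply: h.
by case: hc => [->|/slope_ub]; rewrite ?slope_ge0.
Qed.

Lemma slope_ext q q' : (forall e, coef q e = coef q' e) -> slope q = slope q'.
Proof.
move=> h; apply: slope_char; first exact: slope_ge0.
  by move=> e; rewrite h; apply: slope_ub.
by case: (slope_att q') => ?; [left|right; rewrite h].
Qed.

Lemma slope_zero q : (forall e, coef q e = 0) -> slope q = 0.
Proof. by move=> h; apply: slope_char => // [e|]; rewrite ?h ?eqxx //; left. Qed.

Definition positive_exps q := forall e, coef q e != 0 -> 0 < e.

Lemma slope_eq0 q : positive_exps q -> slope q = 0 -> forall e, coef q e = 0.
Proof.
move=> hpos h0 e; apply/eqP; apply/negP => /negP nz.
by have := slope_ub nz; rewrite h0 leNgt hpos.
Qed.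

Lemma positive_exps_esub q q' k l : positive_exps q -> positive_exps q' ->
  positive_exps (esub (sigman k q) (sigman l q')).
Proof.
move=> hq hq' e; rewrite coef_esub !coef_sigman.
have [nz|z] := eqVneq (coef q e) 0; last by move=> _; exact: hq.
rewrite nz mulr0 sub0r oppr_eq0 mulf_eq0 negb_or => /andP[_]; exact: hq'.
Qed.

(** Ramification: [ram q] is the least r > 0 with r e integral for every
    exponent e of q, i.e. the least period of k |-> sigma^k q. *)

Lemma ram_predP q r : ram_pred q r <->
  (0 < r)%N /\ forall e, coef q e != 0 -> r%:Q * e \is a Num.int.
Proof.
split => [/andP[r0 /allP h]|[r0 h]]; last first.
  by apply/andP; split => //; apply/allP => p pq; apply/implyP; exact: h.
split => // e /[dup] nz /coef_nz_in [p pq pe].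
by move: (h p pq) => /implyP; rewrite pe; apply.
Qed.

Lemma ram_spec q : ram_pred q (ram q) /\ forall r, ram_pred q r -> (ram q <= r)%N.
Proof. by rewrite /ram; case: ex_minnP. Qed.

Lemma ram_gt0 q : (0 < ram q)%N.
Proof. by case: (ram_spec q) => /ram_predP []. Qed.

Lemma sigma_fixP q k :
  (forall e, emk R e ^+ k * coef q e = coef q e) <->
  (forall e, coef q e != 0 -> k%:Q * e \is a Num.int).
Proof.
split => [h e nz|h e].
  by rewrite -(emkX_eq1 R); apply/eqP; apply: (mulIf nz); rewrite mul1r h.
have [->|nz] := eqVneq (coef q e) 0; first by rewrite mulr0.
by have := h e nz; rewrite -(emkX_eq1 R) => /eqP ->; rewrite mul1r.
Qed.

Lemma sigma_ram q e : emk R e ^+ ram q * coef q e = coef q e.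
Proof. by move: e; apply/sigma_fixP; case: (ram_spec q) => /ram_predP []. Qed.

Lemma ram_min q k : (0 < k)%N ->
  (forall e, emk R e ^+ k * coef q e = coef q e) -> (ram q <= k)%N.
Proof. by move=> k0 /sigma_fixP h; case: (ram_spec q) => _; apply; apply/ram_predP. Qed.

Lemma sigman_mod q p : (forall e, emk R e ^+ p * coef q e = coef q e) ->
  forall k e, emk R e ^+ k * coef q e = emk R e ^+ (k %% p) * coef q e.
Proof.
move=> hp k e; rewrite {1}(divn_eq k p) exprD [X in X * _]mulrC -mulrA.
congr (_ * _); elim: (k %/ p)%N => [|n IH]; first by rewrite mul0n expr0 mul1r.
by rewrite mulSn exprD -mulrA IH hp.
Qed.

Lemma sigman_fixed_slope q k : positive_exps q ->
  (forall e, emk R e ^+ k * coef q e = coef q e) <->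
  slope (esub (sigman k q) (sigman 0 q)) = 0.
Proof.
move=> pq; split => [h|h0 e].
  by apply: slope_zero => e; rewrite coef_esub !coef_sigman expr0 mul1r h subrr.
apply/eqP; rewrite -subr_eq0; apply/eqP.
have := slope_eq0 (positive_exps_esub (k:=k) (l:=0) pq pq) h0 e.
by rewrite coef_esub !coef_sigman expr0 mul1r.
Qed.

Lemma ram_from_slopes q q' : positive_exps q -> positive_exps q' ->
  (forall k, (k <= ram q)%N ->
     slope (esub (sigman k q') (sigman 0 q')) = slope (esub (sigman k q) (sigman 0 q))) ->
  ram q' = ram q.
Proof.
move=> pq pq' hs; have fixq := sigman_fixed_slope _ pq; have fixq' := sigman_fixed_slope _ pq'.
have le_q'q : (ram q' <= ram q)%N.
  by apply: ram_min (ram_gt0 q) _; apply/fixq'; rewrite hs // -fixq; apply: sigma_ram.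
apply/eqP; rewrite eqn_leq le_q'q; apply: ram_min (ram_gt0 q') _.
by apply/fixq; rewrite -hs ?(leq_trans le_q'q) // -fixq'; apply: sigma_ram.
Qed.

Lemma ram_dvd_rQ (Q : pit R) p : p \in Q -> (ram p.2 %| rQ Q)%N.
Proof.
rewrite /rQ; elim: Q => [|x Q IH] //; rewrite inE big_cons => /predU1P[->|pQ].
  exact: dvdn_lcml.
exact: dvdn_trans (IH pQ) (dvdn_lcmr _ _).
Qed.

Lemma rQ_gt0 (Q : pit R) : (0 < rQ Q)%N.
Proof.
rewrite /rQ; elim: Q => [|x Q IH]; first by rewrite big_nil.
by rewrite big_cons lcmn_gt0 IH ram_gt0.
Qed.

Lemma int_dvd_scale (d n : nat) e : (d %| n)%N -> d%:Q * e \is a Num.int ->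
  n%:Q * e \is a Num.int.
Proof.
move=> /dvdnP [c ->] h.
by rewrite PoszM intrM -mulrA rpredM // intr_int.
Qed.

End ExponentialFactors.

Lemma sub_kermx_row (F : fieldType) k n p p' (X : 'M[F]_(k, n))
    (A : 'M[F]_(n, p)) (B : 'M[F]_(n, p')) :
  (X <= kermx (row_mx A B))%MS = (X <= kermx A)%MS && (X <= kermx B)%MS.
Proof. by rewrite !sub_kermx mul_mx_row row_mx_eq0. Qed.

(** A kernel decomposition: if V is a right inverse of T killed by M, then
    adding the k equations T to the system M cuts the kernel by exactly k
    dimensions, ker M splitting as ker (M | T) (+) rowspace V. *)
Section KernelRank.
Variables (F : fieldType) (n p k : nat).
Variables (M : 'M[F]_(n, p)) (T : 'M[F]_(n, k)) (V : 'M[F]_(k, n)).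
Hypotheses (VM : V *m M = 0) (VT : V *m T = 1%:M).

Local Notation U := (kermx (row_mx M T)).

Lemma ker_rowmx_mul : U *m M = 0 /\ U *m T = 0.
Proof.
have := submx_refl U; rewrite sub_kermx_row !sub_kermx.
by case/andP => /eqP -> /eqP ->.
Qed.

Lemma ker_split : (kermx M == U + V)%MS.
Proof.
have [UM UT] := ker_rowmx_mul.
apply/andP; split; last by rewrite addsmx_sub !sub_kermx UM VM !eqxx.
have := mulmx_ker M; move: (kermx M) => X XM.
have -> : X = X *m (1%:M - T *m V) + X *m T *m V.
  by rewrite mulmxBr mulmx1 mulmxA subrK.
apply: addmx_sub_adds; last exact: submxMl.
rewrite sub_kermx mul_mx_row row_mx_eq0 -!mulmxA !mulmxBl !mul1mx.
by rewrite -!mulmxA VM VT mulmx1 mulmx0 subr0 XM subrr mulmx0 !eqxx.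
Qed.

Lemma ker_rowmx_cap : (U :&: V)%MS = 0.
Proof.
apply/eqP; rewrite -mxrank_eq0 mxrank_eq0; set Z := (U :&: V)%MS.
have /submxP [D ZV] : (Z <= V)%MS := capmxSr _ _.
have /submxP [D' ZU] : (Z <= U)%MS := capmxSl _ _.
have ZT : Z *m T = 0 by rewrite ZU -mulmxA (ker_rowmx_mul).2 mulmx0.
by rewrite ZV -[D]mulmx1 -VT mulmxA -ZV ZT mul0mx.
Qed.

Lemma rank_right_inverse : \rank V = k.
Proof.
apply/eqP; rewrite eqn_leq rank_leq_row /=.
by have := mxrankM_maxl V T; rewrite VT mxrank1.
Qed.

Lemma rank_ker_rowmx : \rank (kermx M) = (\rank U + k)%N.
Proof.
have := mxrank_sum_cap U V.
rewrite ker_rowmx_cap mxrank0 addn0 rank_right_inverse => <-.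
by have /eqmxP E := ker_split; rewrite E.
Qed.

End KernelRank.

Section MatrixSpace.
Variables (R : realType) (m n : nat).
Local Notation C := R[i].
Local Notation mx := 'M[C]_(m, n).
Implicit Types (x y a : mx) (p q : 'I_n -> C).

Lemma mdist_ge0 x y : 0 <= mdist x y.
Proof. by apply: sumr_ge0 => i _; apply: sumr_ge0 => j _; apply: cabs_ge0. Qed.

Lemma entry_le_mdist x y i j : cabs (x i j - y i j) <= mdist x y.
Proof.
rewrite /mdist (bigD1 i) //= (bigD1 j) //= -addrA lerDl.
apply: addr_ge0; first by apply: sumr_ge0 => j' _; apply: cabs_ge0.
by apply: sumr_ge0 => i' _; apply: sumr_ge0 => j' _; apply: cabs_ge0.
Qed.

Definition dot (a W : mx) : C := \sum_i \sum_j a i j * W i j.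

Lemma mxvec_dot (a W : mx) :
  \sum_(idx < m * n) (mxvec a) 0 idx * (mxvec W) 0 idx = dot a W.
Proof.
rewrite /dot (reindex _ (curry_mxvec_bij _ _)) /= pair_bigA.
by apply: eq_bigr => [[i j]] _ /=; rewrite !mxvecE.
Qed.

Definition vec_cols k (W : 'I_k -> mx) : 'M[C]_(m * n, k) :=
  \matrix_(idx, t) (mxvec (W t)) 0 idx.
Definition vec_rows k (W : 'I_k -> mx) : 'M[C]_(k, m * n) :=
  \matrix_(t, idx) (mxvec (W t)) 0 idx.

Lemma mxvec_mul_vec_cols k a (W : 'I_k -> mx) t :
  (mxvec a *m vec_cols W) 0 t = dot a (W t).
Proof. by rewrite mxE -mxvec_dot; apply: eq_bigr => idx _; rewrite mxE. Qed.

Lemma mul_vec_rows_cols k k' (W' : 'I_k' -> mx) (W : 'I_k -> mx) t' t :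
  (vec_rows W' *m vec_cols W) t' t = dot (W' t') (W t).
Proof. by rewrite mxE -mxvec_dot; apply: eq_bigr => idx _; rewrite !mxE. Qed.

Lemma sub_ker_vec_cols k (W : 'I_k -> mx) a :
  (mxvec a <= kermx (vec_cols W))%MS <-> forall t, dot a (W t) = 0.
Proof.
rewrite sub_kermx; split => [/eqP h t|h]; last first.
  by apply/eqP/rowP => t; rewrite mxvec_mul_vec_cols h mxE.
by have := congr1 (fun X : 'M[C]_(1, k) => X 0 t) h; rewrite mxvec_mul_vec_cols mxE.
Qed.

Lemma dot0 a : dot a 0 = 0.
Proof. by apply: big1 => i _; apply: big1 => j _; rewrite mxE mulr0. Qed.

Lemma dot_delta a i0 j0 : dot a (delta_mx i0 j0) = a i0 j0.
Proof.
rewrite /dot (bigD1 i0) //= [X in _ + X]big1 ?addr0; last first.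
  by move=> i ni; apply: big1 => j _; rewrite mxE (negbTE ni) mulr0.
rewrite (bigD1 j0) //= [X in _ + X]big1 ?addr0; last first.
  by move=> j nj; rewrite mxE (negbTE nj) andbF mulr0.
by rewrite mxE !eqxx mulr1.
Qed.

Lemma dot_comb a u v i j i' j' :
  dot a (u *: delta_mx i j - v *: delta_mx i' j') = u * a i j - v * a i' j'.
Proof.
rewrite -!dot_delta /dot !mulr_sumr -sumrB; apply: eq_bigr => i0 _.
by rewrite !mulr_sumr -sumrB; apply: eq_bigr => j0 _; rewrite !mxE; ring.
Qed.

Definition shift a p : mx := \matrix_(i, j) (a i j - p j).

Lemma shift_ext a p q : p =1 q -> shift a p = shift a q.
Proof. by move=> h; apply/matrixP => i j; rewrite !mxE h. Qed.

Lemma shift0 a : shift a (fun _ => 0) = a.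
Proof. by apply/matrixP => i j; rewrite mxE subr0. Qed.

Lemma shift_dist x y p q :
  mdist (shift x p) (shift y q) <= mdist x y + m%:R * \sum_j cabs (p j - q j).
Proof.
apply: le_trans (_ : _ <= \sum_i \sum_j (cabs (x i j - y i j) + cabs (p j - q j))) _.
  apply: ler_sum => i _; apply: ler_sum => j _; rewrite !mxE.
  have -> : x i j - p j - (y i j - q j) = (x i j - y i j) + - (p j - q j) by ring.
  by apply: le_trans (cabsD _ _) _; rewrite cabsN.
rewrite (eq_bigr (fun i => \sum_j cabs (x i j - y i j) + \sum_j cabs (p j - q j))).
  by rewrite big_split /= sumr_const card_ord mulr_natl.
by move=> i _; rewrite big_split.
Qed.

Definition lipschitz_shift (f : mx -> 'I_n -> C) (L : R) :=
  forall x y, \sum_j cabs (f x j - f y j) <= L * mdist x y.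

Definition shift_homotopy (f : mx -> 'I_n -> C) (x : mx) (t : R) : mx :=
  shift x (fun j => (1 - t)%:C%C * f x j).

Section LipschitzShift.
Variables (f : mx -> 'I_n -> C) (L : R).
Hypotheses (L0 : 0 <= L) (fL : lipschitz_shift f L).

Lemma shift_cont (S : mx -> Prop) : cont_on S (fun x => shift x (f x)).
Proof.
move=> x _ e e0; have D0 : 0 < 1 + m%:R * L by rewrite ltr_pwDl // mulr_ge0.
exists (e / (1 + m%:R * L)); first by rewrite divr_gt0.
move=> y _ hxy; apply: le_lt_trans (shift_dist _ _ _ _) _.
apply: le_lt_trans (_ : _ <= mdist x y * (1 + m%:R * L)) _.
  by rewrite mulrDr mulr1 lerD2l mulrCA ler_wpM2l // mulrC fL.
by rewrite -ltr_pdivlMr.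
Qed.

Lemma shift_homotopy_cont x t e : 0 < e -> exists2 d : R, 0 < d &
  forall y u, 0 <= u <= 1 -> mdist x y < d -> `|t - u| < d ->
    mdist (shift_homotopy f x t) (shift_homotopy f y u) < e.
Proof.
move=> e0; set P := \sum_j cabs (f x j).
have P0 : 0 <= P by apply: sumr_ge0 => j _; apply: cabs_ge0.
set D := 1 + m%:R * L + m%:R * P.
have mL : 0 <= m%:R * L by rewrite mulr_ge0.
have mP : 0 <= m%:R * P by rewrite mulr_ge0.
have D0 : 0 < D by rewrite /D -addrA ltr_pwDl // addr_ge0.
exists (e / D) => [|y u hu hxy htu]; first by rewrite divr_gt0.
have est : mdist (shift_homotopy f x t) (shift_homotopy f y u) <=
    mdist x y * (1 + m%:R * L) + `|t - u| * (m%:R * P).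
  apply: le_trans (shift_dist _ _ _ _) _.
  have hs : \sum_j cabs ((1 - t)%:C%C * f x j - (1 - u)%:C%C * f y j) <=
      `|t - u| * P + L * mdist x y.
    apply: le_trans (ler_sum _ (fun j _ => cabs_interp t (f x j) (f y j) hu)) _.
    by rewrite big_split /= -mulr_sumr lerD2l fL.
  apply: le_trans (_ : _ <= mdist x y + m%:R * (`|t - u| * P + L * mdist x y)) _.
    by rewrite lerD2l ler_wpM2l ?ler0n.
  by rewrite le_eqVlt; apply/orP; left; apply/eqP; ring.
apply: le_lt_trans est _; have M0 := mdist_ge0 x y; have tu0 := normr_ge0 (t - u).
have eD : e = e / D * D by rewrite divfK ?gt_eqF.
rewrite eD /D; set d := e / D in hxy htu eD *.
have h1 : mdist x y * (1 + m%:R * L) < d * (1 + m%:R * L).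
  by rewrite ltr_pM2r // ltr_pwDl.
have h2 : `|t - u| * (m%:R * P) <= d * (m%:R * P) by rewrite ler_wpM2r // ltW.
nra.
Qed.

End LipschitzShift.
End MatrixSpace.

Section Grid.
Variables (R : realType) (Q : pit R).
Local Notation C := R[i].
Local Notation m := (size Q).
Local Notation r := (rQ Q).
Local Notation s := (sQ Q).
Local Notation K := (KQ Q).
Local Notation mx := 'M[C]_(m, s).

Definition grid (j : nat) : rat := (j.+1)%:Q / r%:Q.

Definition row_fac (a : mx) (i : 'I_m) : expfac R :=
  [seq (grid j, a i j) | j : 'I_s <- enum 'I_s].

Lemma fac_Qa a (i : 'I_m) : fac (@Qa R Q a) i = row_fac a i.
Proof. by rewrite /fac /Qa (nth_map i) ?size_enum_ord // nth_ord_enum. Qed.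

Lemma mult_Qa a (i : 'I_m) : mult (@Qa R Q a) i = mult Q i.
Proof. by rewrite /mult /Qa (nth_map i) ?size_enum_ord // nth_ord_enum. Qed.

Lemma size_Qa a : size (@Qa R Q a) = m.
Proof. by rewrite /Qa size_map size_enum_ord. Qed.

Lemma rQ_neq0 : r%:Q != 0.
Proof. by rewrite pnatr_eq0 -lt0n rQ_gt0. Qed.

Lemma grid_gt0 j : 0 < grid j.
Proof. by rewrite /grid divr_gt0 // ltr0n rQ_gt0. Qed.

Lemma grid_inj : injective grid.
Proof.
move=> j j'; rewrite /grid => /(mulIf (invr_neq0 rQ_neq0)) /eqP.
by rewrite eqr_int => /eqP [].
Qed.

Lemma coef_row_fac a i (j : 'I_s) : coef (row_fac a i) (grid j) = a i j.
Proof.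
rewrite /coef /row_fac big_map /= big_enum_cond /=.
rewrite (bigD1 j) /= ?eqxx // big1 ?addr0 // => j' /andP[/eqP hj nj].
by move: nj; rewrite (val_inj (grid_inj hj)) eqxx.
Qed.

Lemma coef_row_fac_off a i e : (forall j : 'I_s, grid j != e) ->
  coef (row_fac a i) e = 0.
Proof.
move=> h; rewrite /coef /row_fac big_map /= big1_seq // => j /andP[hj _].
by have := h j; rewrite hj.
Qed.

Lemma row_fac_pos a i : positive_exps (row_fac a i).
Proof.
move=> e nz; have [/existsP [j /eqP <-]|/existsPn nj] :=
  boolP [exists j : 'I_s, grid j == e]; first exact: grid_gt0.
by rewrite coef_row_fac_off ?eqxx in nz.
Qed.

Lemma K_ge0 : 0 <= K.
Proof. exact: bigmax_ge_id. Qed.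

Lemma s_def : s%:Z = Num.floor (r%:Q * K).
Proof. by rewrite /sQ gez0_abs // floor_ge0 mulr_ge0 ?ler0n ?K_ge0. Qed.

Lemma nat_le_s (c : nat) : (c%:Q <= r%:Q * K) = (c <= s)%N.
Proof. by rewrite -lez_nat s_def floor_ge_int. Qed.

Lemma on_grid e : 0 < e -> r%:Q * e \is a Num.int -> e <= K ->
  exists j : 'I_s, grid j = e.
Proof.
move=> e0 hi eK; move: (floorK hi); set n := Num.floor _ => hn; clearbody n.
have n0 : (0 < n)%R by rewrite -(ltr0z rat) hn mulr_gt0 // ltr0n rQ_gt0.
case: n n0 hn => [[|c]|c] //= _ hn.
have cs : (c < s)%N by rewrite -nat_le_s [_%:Q]hn ler_pM2l ?ltr0n ?rQ_gt0.
exists (Ordinal cs); apply: (mulfI rQ_neq0).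
by rewrite /grid /= mulrC divfK ?rQ_neq0.
Qed.

Lemma grid_int j : (grid j \is a Num.int) = (r %| j.+1)%N.
Proof.
apply/idP/idP => [hi|/dvdnP [c hc]]; last first.
  by rewrite /grid hc PoszM intrM mulfK ?rQ_neq0 // intr_int.
have := floorK hi; set z := Num.floor (grid j) => hz.
have h : (j.+1)%:Q = z%:~R * r%:Q by rewrite hz /grid divfK ?rQ_neq0.
have : Posz j.+1 = z * Posz r by apply: (@intr_inj rat); rewrite intrM -h.
case: z {hz h} => [z'|z'] /=; first by rewrite -PoszM => -[->]; apply: dvdn_mull.
by move=> h; exfalso; have := rQ_gt0 Q; move: h; nia.
Qed.

Lemma emk_grid_int j : (r %| j.+1)%N -> emk R (grid j) = 1.
Proof. by rewrite -grid_int => /floorK <-; rewrite emk_int. Qed.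

End Grid.

Section PointedIrregularType.
Variables (R : realType) (Q : pit R).
Hypothesis HQ : is_pit Q.
Local Notation C := R[i].
Local Notation m := (size Q).
Local Notation r := (rQ Q).
Local Notation s := (sQ Q).
Local Notation K := (KQ Q).
Local Notation mx := 'M[C]_(m, s).
Local Notation grid := (grid Q).
Local Notation row_fac := (@row_fac R Q).
Implicit Types (a x y : mx) (i j : 'I_m) (k l : nat).

Lemma fac_pos i : positive_exps (fac Q i).
Proof.
case: HQ => _ he _ e /coef_nz_in [p pq <-].
by have := he i (ltn_ord i); rewrite /is_expfac => /allP /(_ p pq).
Qed.

Lemma fac_on_grid i e : coef (fac Q i) e != 0 -> exists j : 'I_s, grid j = e.
Proof.
move=> nz; have mem_i := mem_nth (0%N, [::]) (ltn_ord i).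
apply: on_grid; first exact: fac_pos nz.
  have [/ram_predP [_ h] _] := ram_spec (fac Q i).
  exact: int_dvd_scale (ram_dvd_rQ mem_i) (h e nz).
apply: le_trans (slope_ub nz) _.
exact: (le_bigmax_seq 0 _ xpredT (fun p => slope p.2) mem_i).
Qed.

Definition aQ : mx := \matrix_(i, j) coef (fac Q i) (grid j).

Lemma coef_aQ i e : coef (row_fac aQ i) e = coef (fac Q i) e.
Proof.
have [/existsP [j /eqP <-]|/existsPn nj] := boolP [exists j : 'I_s, grid j == e].
  by rewrite coef_row_fac mxE.
rewrite coef_row_fac_off //; apply/esym/eqP/negP => /negP /fac_on_grid [j hj].
by have := nj j; rewrite hj eqxx.
Qed.

Definition dfac a i j k l := esub (sigman k (row_fac a i)) (sigman l (row_fac a j)).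
Definition slopeQ i j k l := slope (esub (sigman k (fac Q i)) (sigman l (fac Q j))).
Definition slope_cond a := forall i j k l,
  (k <= ram (fac Q i))%N -> (l <= ram (fac Q j))%N -> slope (dfac a i j k l) = slopeQ i j k l.

Lemma coef_dfac a i j k l e : coef (dfac a i j k l) e =
  emk R e ^+ k * coef (row_fac a i) e - emk R e ^+ l * coef (row_fac a j) e.
Proof. by rewrite coef_esub !coef_sigman. Qed.

Lemma slope_cond_aQ : slope_cond aQ.
Proof.
move=> i j k l _ _; apply: slope_ext => e.
by rewrite coef_dfac coef_esub !coef_sigman !coef_aQ.
Qed.

Lemma Bsp_slope_cond a : Bsp a -> slope_cond a.
Proof.
case=> _ _ _ _ hs i j k l hk hl.
by have := hs i j k l (ltn_ord i) (ltn_ord j) hk hl; rewrite !fac_Qa.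
Qed.

Lemma slope_cond_per a i : slope_cond a ->
  forall e, emk R e ^+ ram (fac Q i) * coef (row_fac a i) e = coef (row_fac a i) e.
Proof.
move=> hc; apply/sigman_fixed_slope; first exact: row_fac_pos.
rewrite [LHS]hc // /slopeQ -sigman_fixed_slope //; [exact: sigma_ram|exact: fac_pos].
Qed.

Lemma slope_cond_ram a i : slope_cond a -> ram (row_fac a i) = ram (fac Q i).
Proof.
move=> hc; apply: ram_from_slopes; [exact: fac_pos|exact: row_fac_pos|].
by move=> k hk; exact: hc.
Qed.

Lemma slope_cond_distinct a : slope_cond a -> forall i j, i != j -> forall k,
  ~ eqexp (sigman k (row_fac a i)) (row_fac a j).
Proof.
move=> hc i j nij k heq; set ri := ram (fac Q i).
have kle : (k %% ri <= ri)%N by rewrite ltnW // ltn_mod ram_gt0.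
have /esym := hc i j (k %% ri)%N 0%N kle (leq0n _).
have -> : slope (dfac a i j (k %% ri) 0) = 0.
  apply: slope_zero => e; rewrite coef_dfac expr0 mul1r -sigman_mod; last first.
    exact: slope_cond_per.
  by rewrite -coef_sigman heq subrr.
move=> /(slope_eq0 (positive_exps_esub (k:=k %% ri) (l:=0) (fac_pos (i:=i)) (fac_pos (i:=j)))) h.
case: HQ => _ _ hd; apply: (hd i j (ltn_ord i) (ltn_ord j) _ (k %% ri)%N) => [ij|e].
  by move: nij; rewrite (val_inj ij) eqxx.
by have /eqP := h e; rewrite coef_esub !coef_sigman expr0 mul1r subr_eq0 => /eqP.
Qed.

Lemma slope_cond_Bsp a : slope_cond a -> Bsp a.
Proof.
move=> hc; have [Hm _ _] := HQ.
split; rewrite ?size_Qa //; last first.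
- move=> i j k l hi hj; have := hc (Ordinal hi) (Ordinal hj) k l.
  by rewrite /dfac -!fac_Qa.
- by move=> i hi; rewrite (mult_Qa a (Ordinal hi)).
split; rewrite size_Qa.
- by move=> i hi; rewrite -/(mult _ i) (mult_Qa a (Ordinal hi)); apply: Hm.
- move=> i hi; rewrite -/(fac _ i) (fac_Qa a (Ordinal hi)).
  by apply/allP => p /mapP [j _ ->] /=; exact: grid_gt0.
- move=> i j hi hj nij k; rewrite -!/(fac _ _).
  rewrite (fac_Qa a (Ordinal hi)) (fac_Qa a (Ordinal hj)).
  by apply: slope_cond_distinct => //; apply/eqP => /(congr1 val).
Qed.

Lemma Bsp_iff a : Bsp a <-> slope_cond a.
Proof. by split; [exact: Bsp_slope_cond | exact: slope_cond_Bsp]. Qed.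

(** The integral exponents are fixed by sigma, so their coefficients do not
    enter any slope condition: shifting the integral columns of all rows by
    a common vector preserves B(Q). *)
Definition int_supported (p : 'I_s -> C) := forall j : 'I_s, ~~ (r %| j.+1)%N -> p j = 0.

Lemma coef_dfac_shift a p i j k l e : int_supported p ->
  coef (dfac (shift a p) i j k l) e = coef (dfac a i j k l) e.
Proof.
move=> hp; rewrite !coef_dfac.
have [/existsP [j0 /eqP <-]|/existsPn nj] := boolP [exists j0 : 'I_s, grid j0 == e].
  rewrite !coef_row_fac !mxE; have [h|h] := boolP (r %| j0.+1)%N.
    by rewrite emk_grid_int // !expr1n !mul1r opprB addrA subrK.
  by rewrite hp // !subr0.
by rewrite !coef_row_fac_off.
Qed.

Lemma slope_cond_shift a p : int_supported p -> slope_cond (shift a p) <-> slope_cond a.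
Proof.
move=> hp; split => hc i j k l hk hl; rewrite -(hc i j k l hk hl);
  by apply: slope_ext => e; rewrite coef_dfac_shift.
Qed.

(** The trace of Q_a: its coefficient at an integral grid exponent is the
    weighted column sum [trace_col], with weights n_i ram(q_i); at the other
    exponents the Galois conjugates cancel (sum of roots of unity). *)
Definition weight i : nat := (mult Q i * ram (fac Q i))%N.
Definition trace_col a (j : 'I_s) : C := \sum_i (weight i)%:R * a i j.

Lemma coef_trace a e : coef (etrace (@Qa R Q a)) e = \sum_(i < m) (mult Q i)%:R *
  \sum_(t < ram (row_fac a i)) emk R e ^+ t * coef (row_fac a i) e.
Proof.
rewrite /etrace coef_flatten big_map /Qa big_map big_enum /=; apply: eq_bigr => i _.
rewrite (coef_map_scale (fun _ => (mult Q i)%:R)) coef_flatten big_map /=.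
rewrite (_ : iota 0 _ = index_iota 0 (ram (row_fac a i))) ?big_mkord.
  by congr (_ * _); apply: eq_bigr => t _; rewrite coef_sigman.
by rewrite /index_iota subn0.
Qed.

Lemma coef_trace_grid a (j : 'I_s) : slope_cond a ->
  coef (etrace (@Qa R Q a)) (grid j) = if (r %| j.+1)%N then trace_col a j else 0.
Proof.
move=> hc; rewrite coef_trace; case: ifP => h.
  apply: eq_bigr => i _; rewrite emk_grid_int // coef_row_fac slope_cond_ram //.
  under eq_bigr do rewrite expr1n mul1r.
  by rewrite sumr_const card_ord -[a i j *+ _]mulr_natl mulrA -natrM.
apply: big1 => i _; rewrite -mulr_suml coef_row_fac.
have [->|nz] := eqVneq (a i j) 0; first by rewrite !mulr0.
rewrite sum_root_unity ?mul0r ?mulr0 //.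
  apply/eqP; rewrite emkX_eq1; have [/ram_predP [_ hr] _] := ram_spec (row_fac a i).
  by apply: hr; rewrite coef_row_fac.
by apply/negP => /eqP /emk_eq1; rewrite grid_int h.
Qed.

Lemma coef_trace_off a e : (forall j : 'I_s, grid j != e) ->
  coef (etrace (@Qa R Q a)) e = 0.
Proof.
move=> h; rewrite coef_trace big1 // => i _.
by rewrite big1 ?mulr0 // => t _; rewrite coef_row_fac_off ?mulr0.
Qed.

Definition trace_free a := forall j : 'I_s, (r %| j.+1)%N -> trace_col a j = 0.

Lemma SBsp_iff a : SBsp a <-> slope_cond a /\ trace_free a.
Proof.
have trE : slope_cond a -> eqexp (etrace (@Qa R Q a)) [::] <-> trace_free a.
  move=> hc; split => [he j hj|h e].
    by have := he (grid j); rewrite coef_trace_grid // hj coef_nil.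
  rewrite coef_nil; have [/existsP [j /eqP <-]|/existsPn nj] :=
    boolP [exists j : 'I_s, grid j == e]; last exact: coef_trace_off.
  by rewrite coef_trace_grid //; case: ifP => // /h.
split => [[/Bsp_iff hc he]|[hc ht]]; first by split => //; apply/trE.
by split; [apply/Bsp_iff | apply/trE].
Qed.

Definition total_weight : C := \sum_i (weight i)%:R.

Lemma total_weight_neq0 i : total_weight != 0.
Proof.
rewrite /total_weight -natr_sum pnatr_eq0 -lt0n (bigD1 i) //= (leq_trans _ (leq_addr _ _)) //.
by rewrite muln_gt0 ram_gt0 andbT; case: HQ => hm _ _; apply: hm.
Qed.

Definition trace_mean a (j : 'I_s) : C :=
  if (r %| j.+1)%N then trace_col a j / total_weight else 0.

Definition retract a : mx := shift a (trace_mean a).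

Lemma trace_mean_supp a : int_supported (trace_mean a).
Proof. by move=> j /negbTE h; rewrite /trace_mean h. Qed.

Lemma trace_col_shift a p (j : 'I_s) : trace_col (shift a p) j = trace_col a j - total_weight * p j.
Proof.
rewrite /trace_col /total_weight mulr_suml -sumrB; apply: eq_bigr => i _.
by rewrite mxE mulrBr.
Qed.

Lemma retract_SBsp a : Bsp a -> SBsp (retract a).
Proof.
move/Bsp_iff => hc; apply/SBsp_iff; split.
  by apply/slope_cond_shift => //; exact: trace_mean_supp.
move=> j hj; rewrite trace_col_shift /trace_mean hj.
have [W0|W_neq0] := eqVneq total_weight 0; last by rewrite mulrC divfK ?subrr.
rewrite W0 mul0r subr0; apply: big1 => i _.
by have := total_weight_neq0 i; rewrite W0 eqxx.
Qed.

Lemma retract_id a : SBsp a -> retract a = a.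
Proof.
move/SBsp_iff => [_ ht]; rewrite /retract -[RHS]shift0; apply: shift_ext => j.
by rewrite /trace_mean; case: ifP => // /ht ->; rewrite mul0r.
Qed.

Lemma trace_mean_lipschitz : exists2 L : R, 0 <= L & lipschitz_shift trace_mean L.
Proof.
set W : R := (\sum_i weight i)%:R.
exists (cabs (total_weight^-1) * W) => [|x y]; first by rewrite mulr_ge0 ?cabs_ge0.
have hj (j : 'I_s) : cabs (trace_mean x j - trace_mean y j) <=
    cabs (total_weight^-1) * W * \sum_i cabs (x i j - y i j).
  rewrite /trace_mean; case: ifP => _; last first.
    by rewrite subrr cabs0 !mulr_ge0 ?cabs_ge0 // sumr_ge0 // => i _; apply: cabs_ge0.
  rewrite -mulrBl cabsM mulrC -mulrA ler_wpM2l ?cabs_ge0 //.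
  rewrite /trace_col -sumrB; apply: le_trans (cabs_sum _ _ _) _.
  rewrite mulr_sumr; apply: ler_sum => i _; rewrite -mulrBr cabsM cabs_nat.
  apply: ler_wpM2r; first exact: cabs_ge0.
  by rewrite /W ler_nat (bigD1 i) //= leq_addr.
apply: le_trans (ler_sum _ (fun (j : 'I_s) _ => hj j)) _.
by rewrite -mulr_sumr /mdist exchange_big.
Qed.

(** The inclusion SB(Q) -> B(Q) and [retract] are inverse homotopy
    equivalences: retract o incl is the identity, and incl o retract is
    joined to the identity by the straight-line homotopy, which moves only
    the integral columns and hence stays in B(Q). *)
Lemma homotopy_SB_B : homotopy_equiv (@SBsp R Q) (@Bsp R Q).
Proof.
have [L L0 hL] := trace_mean_lipschitz.
exists id, retract; split.
- split => [x _ e e0|x []]; last by [].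
  by exists e => // y _.
- by split; [exact: (shift_cont L0 hL) | exact: retract_SBsp].
- exists (fun x _ => x); split => // [x hx|x t _ _ e e0]; first by rewrite /= retract_id.
  by exists e => // y u _ _.
exists (shift_homotopy trace_mean); split.
- move=> x t /Bsp_iff hc _; apply/Bsp_iff/slope_cond_shift => // j hj.
  by rewrite trace_mean_supp ?mulr0.
- by move=> x _; apply: shift_ext => j; rewrite subr0 rmorph1 mul1r.
- move=> x _; rewrite /= -[RHS]shift0; apply: shift_ext => j.
  by rewrite subrr rmorph0 mul0r.
move=> x t _ _ e e0; have [d d0 hd] := shift_homotopy_cont L0 hL x t e0.
by exists d => // y u _; apply: hd.
Qed.

(** A slope condition slope = c for sigma^k q_i -
    sigma^l q_j asks that the coefficients at the grid exponents above c
    vanish -- linear equations in a -- and that the coefficient at c does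
    not, which is an open condition. *)
Definition lin_cond a := forall i j k l (j' : 'I_s),
  (k <= ram (fac Q i))%N -> (l <= ram (fac Q j))%N -> slopeQ i j k l < grid j' ->
  coef (dfac a i j k l) (grid j') = 0.

Lemma slope_cond_lin a : slope_cond a -> lin_cond a.
Proof.
move=> hc i j k l j' hk hl hlt; apply/eqP/negP => /negP /slope_ub.
by rewrite hc // leNgt hlt.
Qed.

Lemma ram_le_r i : (ram (fac Q i) <= r)%N.
Proof. exact: dvdn_leq (rQ_gt0 Q) (ram_dvd_rQ (mem_nth _ (ltn_ord i))). Qed.

Definition lin_index := ('I_m * 'I_m * 'I_r.+1 * 'I_r.+1 * 'I_s)%type.

Definition lin_active (t : lin_index) : bool :=
  let: (i, j, k, l, j') := t in
  [&& (k <= ram (fac Q i))%N, (l <= ram (fac Q j))%N & slopeQ i j k l < grid j'].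

Definition lin_form (t : lin_index) : mx :=
  let: (i, j, k, l, j') := t in
  if lin_active t then
    emk R (grid j') ^+ k *: delta_mx i j' - emk R (grid j') ^+ l *: delta_mx j j'
  else 0.

Lemma dot_lin_form a (t : lin_index) : dot a (lin_form t) =
  let: (i, j, k, l, j') := t in
  if lin_active t then coef (dfac a i j k l) (grid j') else 0.
Proof.
case: t => [[[[i j] k] l] j'] /=; case: ifP => _; last exact: dot0.
by rewrite dot_comb coef_dfac !coef_row_fac.
Qed.

Definition slope_eqs := vec_cols (fun t : 'I_#|{: lin_index}| => lin_form (enum_val t)).

Lemma ker_slope_eqs a : (mxvec a <= kermx slope_eqs)%MS <-> lin_cond a.
Proof.
rewrite sub_ker_vec_cols; split => [h i j k l j' hk hl hlt|h t].
  have kr : (k < r.+1)%N by rewrite ltnS (leq_trans hk (ram_le_r i)).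
  have lr : (l < r.+1)%N by rewrite ltnS (leq_trans hl (ram_le_r j)).
  have := h (enum_rank (i, j, Ordinal kr, Ordinal lr, j')).
  by rewrite enum_rankK dot_lin_form /= hk hl hlt.
rewrite dot_lin_form; case: (enum_val t) => [[[[i j] k] l] j'].
by case: ifP => // /and3P[hk hl hlt]; apply: h.
Qed.

(** Openness: near a point of B(Q), the prescribed leading coefficients stay
    nonzero.  [radius x] is half the least modulus of these coefficients. *)
Lemma slopeQ_on_grid i j k l : slopeQ i j k l != 0 ->
  exists jc : 'I_s, grid jc = slopeQ i j k l.
Proof.
rewrite /slopeQ; set D := esub _ _ => nz; have eqD e : coef D e = coef (dfac aQ i j k l) e.
  by rewrite coef_dfac coef_esub !coef_sigman !coef_aQ.
case: (slope_att D) => [h|]; first by move: nz; rewrite h eqxx.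
have [/existsP [jc /eqP hj]|/existsPn nj] := boolP [exists jc : 'I_s, grid jc == slope D].
  by exists jc.
by rewrite eqD coef_dfac !coef_row_fac_off // !mulr0 subrr eqxx.
Qed.

Lemma coef_dfac_dist x y i j k l (jc : 'I_s) :
  cabs (coef (dfac y i j k l) (grid jc) - coef (dfac x i j k l) (grid jc)) <=
  2 * mdist x y.
Proof.
rewrite !coef_dfac !coef_row_fac; set u := emk R _ ^+ k; set v := emk R _ ^+ l.
have -> : u * y i jc - v * y j jc - (u * x i jc - v * x j jc) =
    u * (y i jc - x i jc) + - (v * (y j jc - x j jc)) by ring.
apply: le_trans (cabsD _ _) _; rewrite cabsN !cabsM /u /v !emkX !cabs_emk !mul1r.
by rewrite mulr2n mulrDl mul1r lerD // cabsB entry_le_mdist.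
Qed.

Definition lead_index := ('I_m * 'I_m * 'I_r.+1 * 'I_r.+1)%type.

Definition lead_valid (q : lead_index) : bool :=
  let: (i, j, k, l) := q in
  [&& (k <= ram (fac Q i))%N, (l <= ram (fac Q j))%N & slopeQ i j k l != 0].

Definition lead_abs x (q : lead_index) : R :=
  let: (i, j, k, l) := q in cabs (coef (dfac x i j k l) (slopeQ i j k l)).

Definition radius x : R := \big[Num.min/1]_(q | lead_valid q) (lead_abs x q / 2).

Lemma radius_gt0 x : slope_cond x -> 0 < radius x.
Proof.
move=> hc; rewrite /radius; elim/big_ind: _ => // [u v hu hv|].
  by rewrite lt_min hu hv.
move=> [[[i j] k] l] /and3P [hk hl nz] /=.
rewrite divr_gt0 // lt_def cabs_ge0 andbT; apply/eqP => /cabs_eq0 h0.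
case: (slope_att (dfac x i j k l)); rewrite hc // => h.
  by move: nz; rewrite h eqxx.
by rewrite h0 eqxx in h.
Qed.

Lemma radius_le x (q : lead_index) : lead_valid q -> radius x <= lead_abs x q / 2.
Proof. by move=> h; rewrite /radius; apply: bigmin_le_cond. Qed.

Lemma slope_cond_near x y : slope_cond x -> lin_cond y -> mdist x y < radius x ->
  slope_cond y.
Proof.
move=> hc hly hd i j k l hk hl.
have kr : (k < r.+1)%N by rewrite ltnS (leq_trans hk (ram_le_r i)).
have lr : (l < r.+1)%N by rewrite ltnS (leq_trans hl (ram_le_r j)).
apply: slope_char; first exact: slope_ge0.
  move=> e nz; have [/existsP [j' /eqP hj]|/existsPn nj] :=
    boolP [exists j' : 'I_s, grid j' == e]; last first.
    by move: nz; rewrite coef_dfac !coef_row_fac_off // !mulr0 subrr eqxx.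
  rewrite -hj leNgt; apply/negP => hlt.
  by move: nz; rewrite -hj hly ?eqxx.
have [c0|cn0] := eqVneq (slopeQ i j k l) 0; [by left | right].
have [jc hjc] := slopeQ_on_grid cn0.
have hv : lead_valid (i, j, Ordinal kr, Ordinal lr) by rewrite /= hk hl cn0.
have := radius_le x hv; rewrite /lead_abs /= => hle.
apply/negP => /eqP hy; have := coef_dfac_dist x y i j k l jc.
rewrite hjc hy sub0r cabsN => hdist.
have : cabs (coef (dfac x i j k l) (slopeQ i j k l)) < 2 * radius x.
  by apply: le_lt_trans hdist _; rewrite ltr_pM2l.
move: hle; set v := cabs _; set rx := radius x => hle; lra.
Qed.

Lemma Bsp_open : open_in_subspace_dim (@Bsp R Q) (\rank (kermx slope_eqs)).
Proof.
split; first by exists aQ; apply/Bsp_iff/slope_cond_aQ.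
exists (m * s)%N, (kermx slope_eqs); split => // [x /Bsp_iff hc|x /Bsp_iff hc].
  exact/ker_slope_eqs/slope_cond_lin.
exists (radius x); first exact: radius_gt0.
by move=> y /ker_slope_eqs hl hd; apply/Bsp_iff; exact: slope_cond_near hc hl hd.
Qed.

(** The trace equations.  The integral grid columns are j = r n - 1 for
    n = 1, ..., floor K; the trace condition is one equation per such
    column, [trace_col a j = 0]. *)
Definition nK : nat := `|Num.floor K|%N.

Lemma nK_def : nK%:Z = Num.floor K.
Proof. by rewrite /nK gez0_abs // floor_ge0 K_ge0. Qed.

Lemma nat_le_nK (c : nat) : (c%:Q <= K) = (c <= nK)%N.
Proof. by rewrite -lez_nat nK_def floor_ge_int. Qed.

Lemma int_col_lt (n : 'I_nK) : ((r * n.+1).-1 < s)%N.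
Proof.
have h : (0 < r * n.+1)%N by rewrite muln_gt0 rQ_gt0.
rewrite prednK // -nat_le_s PoszM intrM ler_pM2l ?ltr0n ?rQ_gt0 //.
by rewrite nat_le_nK.
Qed.

Definition int_col (n : 'I_nK) : 'I_s := Ordinal (int_col_lt n).

Lemma int_col_S n : (int_col n).+1 = (r * n.+1)%N.
Proof. by rewrite /= prednK // muln_gt0 rQ_gt0. Qed.

Lemma int_col_dvd n : (r %| (int_col n).+1)%N.
Proof. by rewrite int_col_S dvdn_mulr. Qed.

Lemma int_col_inj : injective int_col.
Proof.
move=> n n' /(congr1 (fun j : 'I_s => j.+1)); rewrite !int_col_S.
by move/eqP; rewrite eqn_pmul2l ?rQ_gt0 // => /eqP [] /val_inj.
Qed.

Lemma int_col_surj (j : 'I_s) : (r %| j.+1)%N -> exists n : 'I_nK, int_col n = j.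
Proof.
move=> /dvdnP [c hc]; have c0 : (0 < c)%N by move: hc; case: c.
have cle : (c <= nK)%N.
  rewrite -nat_le_nK -(ler_pM2l (_ : 0 < r%:Q)) ?ltr0n ?rQ_gt0 //.
  by rewrite -intrM -PoszM mulnC -hc nat_le_s ltn_ord.
have nlt : (c.-1 < nK)%N by rewrite prednK.
by exists (Ordinal nlt); apply: val_inj; rewrite /= prednK // mulnC -hc.
Qed.

Lemma trace_freeP a : trace_free a <-> forall n, trace_col a (int_col n) = 0.
Proof.
split => [h n|h j /int_col_surj [n <-] //]; exact/h/int_col_dvd.
Qed.

(** The trace equations as linear forms, and the integral unit columns,
    which are killed by [slope_eqs] and dual to the trace equations. *)
Definition trace_form (n : 'I_nK) : mx :=
  \matrix_(i, j) (if j == int_col n then (weight i)%:R else 0).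
Definition int_unit (n : 'I_nK) : mx := \matrix_(i, j) (if j == int_col n then 1 else 0).

Definition trace_eqs := vec_cols trace_form.
Definition int_cols := vec_rows int_unit.

Lemma dot_trace_form a n : dot a (trace_form n) = trace_col a (int_col n).
Proof.
apply: eq_bigr => i _; rewrite (bigD1 (int_col n)) //= big1 ?addr0.
  by rewrite mxE eqxx mulrC.
by move=> j nj; rewrite mxE (negbTE nj) mulr0.
Qed.

Lemma int_cols_slope_eqs : int_cols *m slope_eqs = 0.
Proof.
apply/matrixP => n t; rewrite mul_vec_rows_cols mxE dot_lin_form.
case: (enum_val t) => [[[[i j] k] l] j']; case: ifP => // _.
rewrite coef_dfac !coef_row_fac !mxE; case: eqP => [->|_]; last by rewrite !mulr0 subrr.
by rewrite emk_grid_int ?int_col_dvd // !expr1n subrr.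
Qed.

Lemma int_cols_trace_eqs : int_cols *m trace_eqs = total_weight%:M.
Proof.
apply/matrixP => n n'; rewrite mul_vec_rows_cols dot_trace_form mxE.
have [<-|nn] := eqVneq n n'.
  by rewrite mulr1n; apply: eq_bigr => i _; rewrite mxE eqxx mulr1.
rewrite mulr0n; apply: big1 => i _; rewrite mxE.
by rewrite (inj_eq int_col_inj) eq_sym (negbTE nn) mulr0.
Qed.

Definition all_eqs := row_mx slope_eqs trace_eqs.

Lemma ker_all_eqs a : (mxvec a <= kermx all_eqs)%MS <-> lin_cond a /\ trace_free a.
Proof.
rewrite sub_kermx_row; split => [/andP[/ker_slope_eqs hl /sub_ker_vec_cols ht]|[hl ht]].
  by split => //; apply/trace_freeP => n; rewrite -dot_trace_form.
apply/andP; split; first exact/ker_slope_eqs.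
by apply/sub_ker_vec_cols => n; rewrite dot_trace_form; move/trace_freeP: ht.
Qed.

Lemma rank_ker_all_eqs : \rank (kermx slope_eqs) = (\rank (kermx all_eqs) + nK)%N.
Proof.
apply: (rank_ker_rowmx (V := total_weight^-1 *: int_cols)).
  by rewrite -scalemxAl int_cols_slope_eqs scaler0.
have [nK0|nK_gt0] := posnP nK.
  by apply/matrixP => n; have := ltn_ord n; rewrite {2}nK0.
have m_gt0 : (0 < m)%N.
  rewrite lt0n; apply: contraTneq nK_gt0 => /size0nil Q0.
  by rewrite /nK /KQ Q0 big_nil floor0.
have Wn0 := total_weight_neq0 (Ordinal m_gt0).
by rewrite -scalemxAl int_cols_trace_eqs scale_scalar_mx mulVf.
Qed.

Lemma SBsp_open : open_in_subspace_dim (@SBsp R Q) (\rank (kermx all_eqs)).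
Proof.
split; first by exists (retract aQ); apply/retract_SBsp/Bsp_iff/slope_cond_aQ.
exists (m * s)%N, (kermx all_eqs); split => // [x /SBsp_iff [hc ht]|x /SBsp_iff [hc ht]].
  exact/ker_all_eqs/(conj (slope_cond_lin hc) ht).
exists (radius x); first exact: radius_gt0.
move=> y /ker_all_eqs [hl hty] hd; apply/SBsp_iff.
by split => //; exact: slope_cond_near hc hl hd.
Qed.

End PointedIrregularType.

Theorem mainTheorem9 (R : realType) (Q : pit R) :
  is_pit Q ->
  homotopy_equiv (@SBsp R Q) (@Bsp R Q) /\
  exists dB dSB : nat,
    [/\ open_in_subspace_dim (@Bsp R Q) dB,
        open_in_subspace_dim (@SBsp R Q) dSB &
        dSB%:Z = dB%:Z - Num.floor (KQ Q)].
Proof.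
move=> HQ; split; first exact: homotopy_SB_B.
exists (\rank (kermx (slope_eqs Q))), (\rank (kermx (all_eqs Q))); split.
- exact: Bsp_open.
- exact: SBsp_open.
by rewrite rank_ker_all_eqs // -nK_def PoszD addrK.
Qed.
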